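(* Let $\mathcal{M}=(S,A,AP,L,I)$ be an interval Markov decision process and let $s,t\in S$ with $s\sim_{(\forall)} t$. Then for every PCTL state formula $\varphi$ we have $s\models_{(\exists)}\varphi$ if and only if $t\models_{(\exists)}\varphi$.
   Context: An interval MDP (IMDP) is a tuple $(S,A,AP,L,I)$ with $S$ a finite set of states, $A$ a finite set of actions, $AP$ a finite set of atomic propositions, $L:S\to 2^{AP}$ a labelling, and $I:S\times A\times S\to\mathbb{I}$ where $\mathbb{I}$ is a set of subintervals of $[0,1]$. For $s\in S,a\in A$, write $s\xrightarrow{a}\mu$ if $\mu$ is a probability distribution on $S$ with $\mu(s')\in I(s,a,s')$ for all $s'$; the set $\Gamma_{s,a}=\{\mu\mid s\xrightarrow{a}\mu\}$ is required to be non-empty. A scheduler is a function $\sigma$ from finite paths to distributions over $A$; a nature is a function $\pi$ mapping a finite path $\omega$ and action $a$ to an element of $\Gamma_{\mathrm{last}(\omega),a}$, where $\mathrm{last}(\omega)$ is the last state of $\omega$. $\Sigma,\Pi$ denote the sets of all schedulers and natures. $\Pr^{\sigma,\pi}_s$ is the unique probability measure on infinite paths (cylinder $\sigma$-algebra) with the one-state cylinder of $s'$ having probability $1$ iff $s'=s$ (else $0$), and $\Pr^{\sigma,\pi}_s[\mathrm{Cyl}(\omega s')]=\Pr^{\sigma,\pi}_s[\mathrm{Cyl}(\omega)]\cdot\sum_{a}\sigma(\omega)(a)\pi(\omega,a)(s')$. PCTL: state formulas $\varphi::=\mathit{true}\mid x\mid\neg\varphi\mid\varphi_1\wedge\varphi_2\mid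 \mathsf{P}_{\bowtie p}(\psi)$, path formulas $\psi::=\mathsf{X}\varphi\mid\varphi_1\mathsf{U}\varphi_2\mid\varphi_1\mathsf{U}^{\le k}\varphi_2$ ($x\in AP$, rational $p\in[0,1]$, $\bowtie\in\{\le,<,\ge,>\}$, $k\in\mathbb{N}$). The relation $\models_{(\exists)}$: $s\models x$ iff $x\in L(s)$; negation, conjunction as usual; $s\models_{(\exists)}\mathsf{P}_{\bowtie p}(\psi)$ iff there exist $\sigma\in\Sigma$ and $\pi\in\Pi$ with $\Pr^{\sigma,\pi}_s[\{\omega\mid\omega\models_{(\exists)}\psi\}]\bowtie p$. For $\omega=s_1s_2\cdots$: $\omega\models\mathsf{X}\varphi$ iff $s_2\models\varphi$; $\omega\models\varphi_1\mathsf{U}^{\le k}\varphi_2$ iff some $i\le k$ has $s_i\models\varphi_2$ and $s_j\models\varphi_1$ for all $j<i$; $\omega\models\varphi_1\mathsf{U}\varphi_2$ iff $\omega\models\varphi_1\mathsf{U}^{\le k}\varphi_2$ for some $k$. Cooperative bisimulation: write $s\to\mu$ if $\mu$ lies in the convex hull of $\bigcup_{a\in A}\Gamma_{s,a}$. An equivalence relation $R\subseteq S\times S$ is a probabilistic $(\forall)$-bisimulation if for all $(s,t)\in R$: $L(s)=L(t)$, and for each $s\to\mu$ there is $t\to\nu$ with $\mu(C)=\nu(C)$ for every equivalence class $C$ of $R$. $s\sim_{(\forall)}t$ iff some probabilistic $(\forall)$-bisimulation contains $(s,t)$. *)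

From HB Require Import structures.
From mathcomp Require Import all_boot all_order all_algebra.
From mathcomp Require Import all_classical all_reals all_analysis.
Set Implicit Arguments. Unset Strict Implicit. Unset Printing Implicit Defensive.
Import Order.TTheory GRing.Theory Num.Theory.
Local Open Scope classical_set_scope.
Local Open Scope ring_scope.

Definition is_distr (R : realType) (T : finType) (mu : T -> R) : Prop :=
  (forall x, 0 <= mu x) /\ \sum_(x : T) mu x = 1.

Definition gamma_of (R : realType) (S A : finType)
  (I : S -> A -> S -> interval R) (s : S) (a : A) : set (S -> R) :=
  [set mu | is_distr mu /\ forall s', mu s' \in I s a s'].

Record imdp (R : realType) := IMDP {
  st : finType;
  act : finType;
  ap : finType;
  lab : st -> {set ap};
  itv : st -> act -> st -> interval R;
  itv_sub01 : forall s a s' (x : R), x \in itv s a s' -> 0 <= x <= 1;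
  gamma_nonempty : forall s a, exists mu, gamma_of itv s a mu
}.

Arguments st {R}. Arguments act {R}. Arguments ap {R}.
Arguments lab {R}. Arguments itv {R}.

Definition Gamma (R : realType) (M : imdp R) (s : st M) (a : act M) :=
  gamma_of (itv M) s a.

(* Finite paths: the nonempty sequence x :: p is represented by (x, p). *)
Definition fpath (S : Type) := (S * seq S)%type.
Definition flast (S : Type) (w : fpath S) : S := last w.1 w.2.
Definition fext (S : Type) (w : fpath S) (s' : S) : fpath S := (w.1, rcons w.2 s').

Record scheduler (R : realType) (M : imdp R) := Scheduler {
  sched :> fpath (st M) -> act M -> R;
  sched_distr : forall w, is_distr (sched w)
}.

Record nature (R : realType) (M : imdp R) := Nature {
  natf :> fpath (st M) -> act M -> st M -> R;
  natf_in : forall w a, Gamma (flast w) a (natf w a)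
}.

(* Infinite paths (omega i = (i+1)-th state) and the cylinder sigma-algebra. *)
Definition ipath (S : Type) (s0 : S) := nat -> S.
Arguments ipath : clear implicits.
HB.instance Definition _ (S : Type) (s0 : S) := gen_eqMixin (ipath S s0).
HB.instance Definition _ (S : Type) (s0 : S) := gen_choiceMixin (ipath S s0).
HB.instance Definition _ (S : Type) (s0 : S) :=
  isPointed.Build (ipath S s0) (fun _ => s0).

Definition cyl (S : Type) (s0 : S) (w : fpath S) : set (ipath S s0) :=
  [set om | forall i, (i <= size w.2)%N -> om i = nth w.1 (w.1 :: w.2) i].

Arguments cyl : clear implicits.

Definition cyls (S : Type) (s0 : S) : set (set (ipath S s0)) :=
  [set C | exists w : fpath S, C = cyl S s0 w].

Arguments cyls : clear implicits.
Definition pathspace (S : Type) (s0 : S) := g_sigma_algebraType (cyls S s0).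
Arguments pathspace : clear implicits.

Definition is_path_measure (R : realType) (M : imdp R)
  (sg : scheduler M) (pi : nature M) (s : st M)
  (P : probability (pathspace (st M) s) R) : Prop :=
  (forall x : st M, P (cyl (st M) s (x, [::])) = (if x == s then 1 else 0)%:E) /\
  (forall (w : fpath (st M)) (s' : st M),
     P (cyl (st M) s (fext w s')) =
     (P (cyl (st M) s w) * (\sum_(a : act M) sg w a * pi w a s')%:E)%E).

Arguments is_path_measure {R M} sg pi s P.

Inductive cmp := CLe | CLt | CGe | CGt.

Definition cmp_sem (R : realType) (c : cmp) (x y : \bar R) : Prop :=
  match c with
  | CLe => (x <= y)%E
  | CLt => (x < y)%E
  | CGe => (x >= y)%E
  | CGt => (x > y)%E
  end.

Definition prob01 := {p : rat | 0 <= p <= 1}.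

Inductive sform (AP : Type) : Type :=
  | STrue : sform AP
  | SAtom : AP -> sform AP
  | SNot : sform AP -> sform AP
  | SAnd : sform AP -> sform AP -> sform AP
  | SProb : cmp -> prob01 -> pform AP -> sform AP
with pform (AP : Type) : Type :=
  | PNext : sform AP -> pform AP
  | PUntil : sform AP -> sform AP -> pform AP
  | PBUntil : sform AP -> sform AP -> nat -> pform AP.

Arguments STrue {AP}.

(* Existential semantics |=_(exists). Paths om are 0-indexed: om 0 = s_1. *)
Section Semantics.
Variables (R : realType) (M : imdp R).

Fixpoint sat_s (f : sform (ap M)) (s : st M) {struct f} : Prop :=
  match f with
  | STrue => True
  | SAtom x => x \in lab M s
  | SNot f1 => ~ sat_s f1 s
  | SAnd f1 f2 => sat_s f1 s /\ sat_s f2 s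
  | SProb c p g =>
      exists (sg : scheduler M) (pi : nature M) (P : probability (pathspace (st M) s) R),
        is_path_measure sg pi s P /\
        cmp_sem c (P [set om : ipath (st M) s | sat_p g om]) (ratr (sval p))%:E
  end
with sat_p (g : pform (ap M)) (om : nat -> st M) {struct g} : Prop :=
  match g with
  | PNext f => sat_s f (om 1%N)
  | PBUntil f1 f2 k =>
      (* some i <= k (1-indexed), i.e. i < k (0-indexed) *)
      exists i, (i < k)%N /\ sat_s f2 (om i) /\
                forall j, (j < i)%N -> sat_s f1 (om j)
  | PUntil f1 f2 =>
      exists k, exists i, (i < k)%N /\ sat_s f2 (om i) /\
                forall j, (j < i)%N -> sat_s f1 (om j)
  end.

Definition coop_step (s : st M) (mu : st M -> R) : Prop :=
  exists (n : nat) (w : 'I_n -> R) (nu : 'I_n -> st M -> R),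
    (forall i, 0 <= w i) /\ \sum_(i < n) w i = 1 /\
    (forall i, exists a, Gamma s a (nu i)) /\
    (forall x, mu x = \sum_(i < n) w i * nu i x).

Definition is_equivalence (Rl : rel (st M)) : Prop :=
  (forall x, Rl x x) /\ (forall x y, Rl x y -> Rl y x) /\
  (forall x y z, Rl x y -> Rl y z -> Rl x z).

Definition class_mass (Rl : rel (st M)) (mu : st M -> R) (y : st M) : R :=
  \sum_(x | Rl y x) mu x.

Definition is_forall_bisim (Rl : rel (st M)) : Prop :=
  is_equivalence Rl /\
  forall s t, Rl s t ->
    lab M s = lab M t /\
    forall mu, coop_step s mu ->
      exists nu, coop_step t nu /\
        forall y, class_mass Rl mu y = class_mass Rl nu y.

Definition bisim_forall (s t : st M) : Prop :=
  exists Rl, is_forall_bisim Rl /\ Rl s t.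

End Semantics.

(* Any kernel giving each finite path a distribution of successors induces a path
   measure: the image of Lebesgue measure on [0, 1) under the map that reads a path off
   u by repeatedly subdividing the current interval in proportion to the successor
   probabilities, so that the cylinder of w pulls back to an interval whose length is the
   product of the transition probabilities along w.
   Let Rl be a (forall)-bisimulation relating s and t, and fix a scheduler and a nature
   from s. Scheduler/nature steps are exactly the cooperative steps, and these are closed
   under convex combinations. One can therefore build, history by history, a scheduler
   and a nature from t whose lumped weights (the total probability of the paths visiting
   a given sequence of Rl-classes) coincide with those from s: at a history w, mix
   Rl-matching steps for all histories lumped with w, weighted by their conditional
   probabilities. By induction on formulas, satisfaction is Rl-invariant and every path
   formula denotes a disjoint union of cylinders over a lump-invariant set of prefixes
   (for until, those ending at the first time the goal holds), so the two path measures
   agree on it. *)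

From Pilot Require Import Defs.
From HB Require Import structures.
From mathcomp Require Import all_boot all_order all_algebra.
From mathcomp Require Import all_classical all_reals all_analysis.
Set Implicit Arguments. Unset Strict Implicit. Unset Printing Implicit Defensive.
Import Order.TTheory GRing.Theory Num.Theory.
Local Open Scope classical_set_scope.
Local Open Scope ring_scope.

(* Shadows the [fpath] notation of path.v. *)
Local Notation fpath := Defs.fpath.

(** * Path measures by interval subdivision *)

Section Prefix.
Variables (S : Type) (s0 : S).

Definition prefix_of (om : nat -> S) n : fpath S :=
  (om 0%N, mkseq (fun i => om i.+1) n).

Lemma cylP (om : ipath S s0) (w : fpath S) :
  cyl S s0 w om <-> prefix_of om (size w.2) = w.
Proof.
case: w => x p /=; split => [om_w | [<- <-] [|i] //=].
- have om0 : om 0%N = x by exact: (om_w 0%N).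
  congr pair => //; apply: (eq_from_nth (x0 := x)); first by rewrite size_mkseq.
  by move=> i; rewrite size_mkseq => ip; rewrite nth_mkseq // (om_w i.+1).
- by rewrite size_mkseq => ip; rewrite nth_mkseq.
Qed.

Lemma fext_inj (w1 w2 : fpath S) x1 x2 :
  fext w1 x1 = fext w2 x2 -> w1 = w2 /\ x1 = x2.
Proof. by case: w1 w2 => a1 p1 [a2 p2] [-> /rcons_inj [-> ->]]. Qed.

End Prefix.

Section Sampling.
Variables (R : realType) (S : finType) (s0 : S) (q : fpath S -> S -> R).
Hypothesis q_distr : forall w, is_distr (q w).

Let q_ge0 w x : 0 <= q w x. Proof. by case: (q_distr w). Qed.

Definition cumul w k := \sum_(0 <= i < k) q w (nth s0 (enum S) i).

Lemma cumul_index_succ w x :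
  cumul w (index x (enum S)).+1 = cumul w (index x (enum S)) + q w x.
Proof. by rewrite /cumul big_nat_recr //= nth_index // mem_enum. Qed.

Lemma le_cumul w : {homo cumul w : i j / (i <= j)%N >-> i <= j}.
Proof.
move=> i j /subnKC <-; rewrite /cumul (big_cat_nat _ (leq_addr _ _)) //=.
by rewrite lerDl sumr_ge0.
Qed.

Lemma cumul_card w : cumul w #|S| = 1.
Proof.
case: (q_distr w) => _ <-; rewrite /cumul cardE -(big_nth s0 predT (q w)).
by rewrite big_enum.
Qed.

Local Notation unit_itv := (`[0%R, 1%R[%classic : set R).

(* After n sampling steps, [prefix] is the path read so far and [lo, lo + len) is the
   set of u that produce it. *)
Record stage := Stage { prefix : fpath S; lo : R; len : R }.

Definition lower (c : stage) x := lo c + len c * cumul (prefix c) (index x (enum S)).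

Definition in_slice (c : stage) x (u : R) :=
  lower c x <= u < lower c x + len c * q (prefix c) x.

Definition refine (c : stage) x :=
  Stage (fext (prefix c) x) (lower c x) (len c * q (prefix c) x).

(* The default s0 is only returned for u outside [lo c, lo c + len c). *)
Definition choose_state (c : stage) (u : R) := odflt s0 [pick x | in_slice c x u].

Lemma in_slice_uniq c u x y : 0 <= len c ->
  in_slice c x u -> in_slice c y u -> x = y.
Proof.
move=> len_ge0.
have disj a b : (index a (enum S) < index b (enum S))%N ->
    in_slice c a u -> ~~ in_slice c b u.
  rewrite /in_slice /lower => ab /andP[_ ua]; rewrite negb_and -ltNge orbC.
  apply/orP; right; apply: (lt_le_trans ua).
  by rewrite -addrA -mulrDr -cumul_index_succ lerD2l ler_wpM2l // le_cumul.
case: (ltngtP (index x (enum S)) (index y (enum S)))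
  => [/disj + xu yu|/disj + xu yu|xy _ _].
- by move=> /(_ xu); rewrite yu.
- by move=> /(_ yu); rewrite xu.
- by move/(congr1 (nth s0 (enum S))): xy; rewrite !nth_index ?mem_enum.
Qed.

Lemma exists_slice c u : lo c <= u < lo c + len c -> exists x, in_slice c x u.
Proof.
move=> /andP[lo_u u_hi].
suff [j j_card j_u] : exists2 j, (j < #|S|)%N &
    lo c + len c * cumul (prefix c) j <= u < lo c + len c * cumul (prefix c) j.+1.
  have j_enum : (j < size (enum S))%N by rewrite -cardE.
  exists (nth s0 (enum S) j).
  rewrite /in_slice /lower index_uniq ?enum_uniq //.
  by move: j_u; rewrite {2}/cumul big_nat_recr //= mulrDr addrA.
have : u < lo c + len c * cumul (prefix c) #|S| by rewrite cumul_card mulr1.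
elim: #|S| => [|k IH u_k]; first by rewrite /cumul big_geq // mulr0 addr0 ltNge lo_u.
have [/IH [j jk j_u]|k_u] := ltP u (lo c + len c * cumul (prefix c) k).
  by exists j => //; exact: ltnW.
by exists k; rewrite ?k_u.
Qed.

Lemma choose_state_slice c u : lo c <= u < lo c + len c ->
  in_slice c (choose_state c u) u.
Proof.
move=> /exists_slice [x xu]; rewrite /choose_state.
by case: pickP => [y //|/(_ x)]; rewrite xu.
Qed.

Lemma in_slice_itv c x u : 0 <= len c ->
  in_slice c x u -> lo c <= u < lo c + len c.
Proof.
rewrite /in_slice /lower => len_ge0 /andP[lx xu]; apply/andP; split.
  by apply: le_trans lx; rewrite lerDl mulr_ge0 // sumr_ge0.
apply: (lt_le_trans xu); rewrite -addrA -mulrDr -cumul_index_succ lerD2l.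
rewrite -[leRHS]mulr1 ler_wpM2l // -(cumul_card (prefix c)) le_cumul //.
by rewrite cardE index_mem mem_enum.
Qed.

Fixpoint stage_at (u : R) n : stage :=
  if n is n'.+1 then
    let c := stage_at u n' in refine c (choose_state c u)
  else Stage (s0, [::]) 0 1.

(* The stage whose prefix is w; its interval is empty unless w starts at s0. *)
Definition stage_of (w : fpath S) : stage :=
  foldl refine (Stage (w.1, [::]) 0 (w.1 == s0)%:R) w.2.

Definition sample (u : R) : ipath S s0 := fun i => flast (prefix (stage_at u i)).

Lemma stage_of_fext w x : stage_of (fext w x) = refine (stage_of w) x.
Proof. by rewrite /stage_of /= foldl_rcons. Qed.

Lemma prefix_stage_of w : prefix (stage_of w) = w.
Proof.
case: w => x p; elim/last_ind: p => [//|p y IH].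
by rewrite -[(x, rcons p y)]/(fext (x, p) y) stage_of_fext /= IH.
Qed.

Lemma len_stage_of_ge0 w : 0 <= len (stage_of w).
Proof.
case: w => x p; elim/last_ind: p => [|p y IH]; first exact: ler0n.
by rewrite -[(x, rcons p y)]/(fext (x, p) y) stage_of_fext mulr_ge0.
Qed.

Lemma stage_atE u n : stage_at u n = stage_of (prefix (stage_at u n)).
Proof.
elim: n => [|n IH] /=; first by rewrite /stage_of /= eqxx.
by rewrite stage_of_fext -IH.
Qed.

Lemma prefix_stage_at u n : prefix (stage_at u n) = prefix_of (sample u) n.
Proof.
elim: n => [//|n IH]; rewrite [LHS]/= IH /fext /prefix_of mkseqS /=.
by congr (_, rcons _ _); rewrite /sample /flast /= last_rcons.
Qed.

Lemma stage_at_itv w (u : R) :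
  (0 <= u < 1 /\ prefix (stage_at u (size w.2)) = w) <->
  lo (stage_of w) <= u < lo (stage_of w) + len (stage_of w).
Proof.
case: w => x p; elim/last_ind: p => [|p y IH].
  rewrite /stage_of /= add0r; case: eqP => [->|ne] /=.
    by split=> [[]|]; rewrite mulr1n.
  split=> [[_ [e]]|/andP[u0 u1]]; first by case: ne.
  by have := le_lt_trans u0 u1; rewrite ltxx.
rewrite -[(x, rcons p y)]/(fext (x, p) y) stage_of_fext /= size_rcons.
set c := stage_of (x, p); set n := size p.
have len_ge0 : 0 <= len c := len_stage_of_ge0 _.
have stage_c : prefix (stage_at u n) = (x, p) -> stage_at u n = c.
  by move=> e; rewrite stage_atE e.
have -> : prefix (stage_at u n.+1) =
    fext (prefix (stage_at u n)) (choose_state (stage_at u n) u) by [].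
split.
- move=> [u01 /= e_ext]; have [e <-] := fext_inj e_ext.
  by rewrite (stage_c e); apply: choose_state_slice; rewrite -IH.
- move=> y_u; have /IH [u01 e] := in_slice_itv len_ge0 y_u.
  split=> //; rewrite e (stage_c e); congr fext.
  apply: in_slice_uniq len_ge0 _ y_u; apply: choose_state_slice.
  by rewrite -IH.
Qed.

Lemma sample_preimage_cyl w :
  unit_itv `&` sample @^-1` cyl S s0 w =
  `[lo (stage_of w), lo (stage_of w) + len (stage_of w)[%classic.
Proof.
apply/seteqP; split=> u /=; rewrite !in_itv /= -stage_at_itv.
  by move=> [u01 /cylP]; rewrite -prefix_stage_at.
by move=> [u01 e]; split=> //; apply/cylP; rewrite -prefix_stage_at.
Qed.

Lemma measurable_sample : measurable_fun unit_itv (sample : R -> pathspace S s0).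
Proof.
apply: (@measurability _ _ _ (pathspace S s0) _ _ (cyls S s0)) => // _ [_ [w ->] <-].
by rewrite sample_preimage_cyl; exact: measurable_itv.
Qed.

Local Open Scope ereal_scope.

Definition sample_measure (A : set (pathspace S s0)) : \bar R :=
  lebesgue_measure (unit_itv `&` sample @^-1` A).

Let sample_measure0 : sample_measure set0 = 0.
Proof. by rewrite /sample_measure preimage_set0 setI0 measure0. Qed.

Let sample_measure_ge0 A : 0 <= sample_measure A.
Proof. exact: measure_ge0. Qed.

Let sample_measure_sigma_additive : semi_sigma_additive sample_measure.
Proof.
move=> F mF tF mUF; rewrite /sample_measure preimage_bigcup setI_bigcupr.
apply: measure_semi_sigma_additive.
- by move=> n; apply: measurable_sample => //; exact: measurable_itv.
- apply/trivIsetP => i j _ _ ij; rewrite setIACA setIid -preimage_setI.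
  by move/trivIsetP: tF => /(_ i j I I ij) ->; rewrite preimage_set0 setI0.
- rewrite -setI_bigcupr -preimage_bigcup.
  by apply: measurable_sample => //; exact: measurable_itv.
Qed.

HB.instance Definition _ := isMeasure.Build _ _ _ sample_measure
  sample_measure0 sample_measure_ge0 sample_measure_sigma_additive.

Let sample_measure_setT : sample_measure setT = 1.
Proof.
rewrite /sample_measure preimage_setT setIT lebesgue_measure_itv /= lte_fin ltr01.
by rewrite -EFinB subr0.
Qed.

HB.instance Definition _ := Measure_isProbability.Build _ _ _ sample_measure
  sample_measure_setT.

Definition sample_probability : probability (pathspace S s0) R := sample_measure.

Lemma sample_measure_cyl w : sample_measure (cyl S s0 w) = (len (stage_of w))%:E.
Proof.
rewrite /sample_measure sample_preimage_cyl lebesgue_measure_itv /= lte_fin ltrDl.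
have [len_gt0|len_le0] := ltP 0%R (len (stage_of w)).
  by rewrite -EFinB addrAC subrr add0r.
by congr EFin; apply/esym/le_anti; rewrite len_le0 len_stage_of_ge0.
Qed.

End Sampling.

Lemma exists_path_measure (R : realType) (S : finType) (s0 : S)
    (q : fpath S -> S -> R) : (forall w, is_distr (q w)) ->
  exists P : probability (pathspace S s0) R,
    (forall x, P (cyl S s0 (x, [::])) = (if x == s0 then 1 else 0)%:E) /\
    (forall w x, P (cyl S s0 (fext w x)) = (P (cyl S s0 w) * (q w x)%:E)%E).
Proof.
move=> q_distr; exists (sample_probability s0 q_distr); split=> [x|w x].
  by rewrite [LHS](sample_measure_cyl s0 q_distr) /stage_of /=; case: (x == s0).
rewrite [LHS](sample_measure_cyl s0 q_distr) stage_of_fext /= EFinM.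
by rewrite -(sample_measure_cyl s0 q_distr) prefix_stage_of.
Qed.

(** * Cooperative steps *)

Lemma convex_comb_in_itv (R : realDomainType) (K : finType) (P : pred K) (c v : K -> R)
    (i : interval R) :
  (forall k, P k -> 0 <= c k) -> \sum_(k | P k) c k = 1 ->
  (forall k, P k -> v k \in i) -> \sum_(k | P k) c k * v k \in i.
Proof.
move=> c_ge0 c_sum1 v_in.
have [k0 Pk0] : exists k, P k.
  case: (pickP P) => [k Pk|P0]; first by exists k.
  by move: c_sum1; rewrite big_pred0 // => /esym/eqP; rewrite oner_eq0.
have v_real : {in P, forall k, v k \is Num.real} by move=> k _; exact: num_real.
have [kmin Pmin minP] := real_arg_minP Pk0 v_real.
have [kmax Pmax maxP] := real_arg_maxP Pk0 v_real.
apply: (@interval_is_interval R i (v kmin) (v kmax)); [exact: v_in..|].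
apply/andP; split.
- rewrite -[X in X <= _]mul1r -c_sum1 mulr_suml; apply: ler_sum => k Pk.
  by rewrite ler_wpM2l ?c_ge0 // minP.
- rewrite -[X in _ <= X]mul1r -c_sum1 mulr_suml; apply: ler_sum => k Pk.
  by rewrite ler_wpM2l ?c_ge0 //; exact: maxP.
Qed.

Section Convexity.
Variables (R : realType) (M : imdp R).
Local Notation S := (st M).
Local Notation A := (act M).

Lemma Gamma_convex (K : finType) (P : pred K) (c : K -> R) (nu : K -> S -> R) x a :
  (forall k, P k -> 0 <= c k) -> \sum_(k | P k) c k = 1 ->
  (forall k, P k -> Gamma x a (nu k)) ->
  Gamma x a (fun y => \sum_(k | P k) c k * nu k y).
Proof.
move=> c_ge0 c_sum1 nuG; split; [split|].
- move=> y; apply: sumr_ge0 => k Pk; rewrite mulr_ge0 ?c_ge0 //.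
  by case: (nuG k Pk) => -[].
- rewrite exchange_big /= -[RHS]c_sum1; apply: eq_bigr => k Pk.
  by rewrite -mulr_sumr; case: (nuG k Pk) => -[_ ->]; rewrite mulr1.
- move=> y; apply: convex_comb_in_itv => // k Pk.
  by case: (nuG k Pk) => _.
Qed.

Definition sched_step (x : S) (mu : S -> R) : Prop :=
  exists (sg : A -> R) (pi : A -> S -> R), [/\ is_distr sg,
    forall a, Gamma x a (pi a) & forall y, mu y = \sum_a sg a * pi a y].

Lemma coop_step_mixture (K : finType) (c : K -> R) (nu : K -> S -> R) (act_of : K -> A)
    x mu :
  (forall k, 0 <= c k) -> \sum_k c k = 1 -> (forall k, Gamma x (act_of k) (nu k)) ->
  (forall y, mu y = \sum_k c k * nu k y) -> coop_step x mu.
Proof.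
move=> c_ge0 c_sum1 nuG mu_def.
exists #|K|, (fun i => c (enum_val i)), (fun i => nu (enum_val i)).
split=> //; split; first by rewrite -c_sum1 [RHS]big_enum_val.
split=> [i|y]; first by exists (act_of (enum_val i)).
by rewrite mu_def [LHS]big_enum_val.
Qed.

Lemma sched_step_coop x mu : sched_step x mu -> coop_step x mu.
Proof. by move=> [sg [pi [[]]]]; exact: coop_step_mixture. Qed.

Lemma coop_step_sched x mu : coop_step x mu -> sched_step x mu.
Proof.
move=> [n [w [nu [w_ge0 [w_sum1 [nuG mu_def]]]]]].
have [act_of act_ofP] := choice nuG.
have [gam gamP] := choice (gamma_nonempty x).
pose sg a := \sum_(i | act_of i == a) w i.
have sg_ge0 a : 0 <= sg a by apply: sumr_ge0.
have sum_by_act (F : 'I_n -> R) : \sum_i F i = \sum_a \sum_(i | act_of i == a) F i.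
  exact: partition_big.
exists sg, (fun a y => if sg a == 0 then gam a y
  else \sum_(i | act_of i == a) (w i / sg a) * nu i y).
split=> [|a|y]; first by split=> //; rewrite -w_sum1 sum_by_act.
- have [_|sg_neq0] := eqVneq (sg a) 0; first exact: gamP.
  apply: (Gamma_convex (c := fun i => w i / sg a)) => [i _|| i /eqP <-//].
    by rewrite divr_ge0.
  by rewrite -mulr_suml divff.
- rewrite mu_def sum_by_act; apply: eq_bigr => a _.
  have [sg_eq0|sg_neq0] := eqVneq (sg a) 0.
    rewrite sg_eq0 mul0r; apply: big1 => i /eqP act_i.
    have /(_ i) := psumr_eq0P (fun i _ => w_ge0 i) sg_eq0.
    by rewrite act_i eqxx => ->; rewrite ?mul0r.
  rewrite mulr_sumr; apply: eq_bigr => i _.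
  by rewrite mulrA mulrCA divff ?mulr1.
Qed.

Lemma coop_step_convex (K : finType) (P : pred K) (c : K -> R) (nu : K -> S -> R) x :
  (forall k, P k -> 0 <= c k) -> \sum_(k | P k) c k = 1 ->
  (forall k, P k -> coop_step x (nu k)) ->
  coop_step x (fun y => \sum_(k | P k) c k * nu k y).
Proof.
move=> c_ge0 c_sum1 nu_coop.
have [gam gamP] := choice (gamma_nonempty x).
have : forall k, exists sp : (A -> R) * (A -> S -> R),
    (forall a, Gamma x a (sp.2 a)) /\
    (P k -> is_distr sp.1 /\ forall y, nu k y = \sum_a sp.1 a * sp.2 a y).
  move=> k; have [Pk|_] := boolP (P k); last by exists (fun _ => 0, gam).
  by have [sg [pi [? ? ?]]] := coop_step_sched (nu_coop k Pk); exists (sg, pi).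
move=> /choice [sp spP].
pose weight k a := if P k then c k * (sp k).1 a else 0.
apply: (@coop_step_mixture _ (fun ka => weight ka.1 ka.2) (fun ka => (sp ka.1).2 ka.2) snd).
- move=> [k a]; rewrite /weight /=; case: ifP => // Pk; rewrite mulr_ge0 ?c_ge0 //.
  by case: (spP k) => _ /(_ Pk) [[]].
- rewrite -pair_bigA /= -c_sum1 [RHS]big_mkcond; apply: eq_bigr => k _.
  rewrite /weight /=; case: ifP => Pk; last by rewrite big1.
  by rewrite -mulr_sumr; case: (spP k) => _ /(_ Pk) [[_ ->] _]; rewrite mulr1.
- by move=> [k a]; case: (spP k).
- move=> y; rewrite -(pair_bigA _ (fun k a => weight k a * (sp k).2 a y)) /=.
  rewrite big_mkcond; apply: eq_bigr => k _.
  rewrite /weight /=; case: ifP => Pk; last by rewrite big1 // => a _; rewrite mul0r.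
  case: (spP k) => _ /(_ Pk) [_ ->]; rewrite mulr_sumr.
  by apply: eq_bigr => a _; rewrite mulrA.
Qed.

End Convexity.

(** * Lumped path weights *)

Section FinitePaths.
Variables (R : numDomainType) (S : finType).

Definition npath n := (S * n.-tuple S)%type.

Definition fpath_of n (p : npath n) : fpath S := (p.1, tval p.2).

Definition state_at (w : fpath S) i := nth w.1 (w.1 :: w.2) i.

Lemma fpath_of_inj n : injective (@fpath_of n).
Proof. by move=> [x t] [x' t'] [-> /val_inj ->]. Qed.

Lemma sum_tuple_rcons (V : nmodType) n (F : n.+1.-tuple S -> V) :
  \sum_(t : n.+1.-tuple S) F t = \sum_(t : n.-tuple S) \sum_y F [tuple of rcons t y].
Proof.
rewrite pair_bigA /=.
pose split_last (t : n.+1.-tuple S) : n.-tuple S * S :=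
  ([tuple of belast (thead t) (behead t)], last (thead t) (behead t)).
have splitK t : [tuple of rcons (split_last t).1 (split_last t).2] = t.
  by apply: val_inj; case: t => -[|x s] ? //=; rewrite -lastI.
rewrite (reindex (fun ty : n.-tuple S * S => [tuple of rcons ty.1 ty.2])) //.
exists split_last => [[t y] _|t _]; last exact: splitK.
case: (split_last _) (splitK [tuple of rcons t y]) => t' y' /(congr1 val) /=.
by case/rcons_inj => /val_inj -> ->.
Qed.

Lemma sum_npath_succ (V : nmodType) n (F : fpath S -> V) :
  \sum_(p : npath n.+1) F (fpath_of p) = \sum_(p : npath n) \sum_y F (fext (fpath_of p) y).
Proof.
rewrite -[LHS](pair_bigA _ (fun x (t : n.+1.-tuple S) => F (x, tval t))).
rewrite -[RHS](pair_bigA _ (fun x (t : n.-tuple S) => \sum_y F (fext (x, tval t) y))).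
by apply: eq_bigr => x _; rewrite sum_tuple_rcons.
Qed.

Lemma fext_eq (w1 w2 : fpath S) y1 y2 :
  (fext w1 y1 == fext w2 y2) = (w1 == w2) && (y1 == y2).
Proof. by case: w1 w2 => a1 p1 [a2 p2]; rewrite !xpair_eqE eqseq_rcons andbA. Qed.

(* Q w is the probability of the cylinder of w under the successor kernel mu from s. *)
Definition path_weights (s : S) (mu : fpath S -> S -> R) (Q : fpath S -> R) :=
  [/\ forall x, Q (x, [::]) = (if x == s then 1 else 0),
      forall w y, Q (fext w y) = Q w * mu w y & forall w, 0 <= Q w].

End FinitePaths.

Section Lumping.
Variables (R : realType) (M : imdp R).
Local Notation S := (st M).
Variable Rl : rel S.
Hypothesis Rl_equiv : is_equivalence Rl.

Definition class_rep (x : S) : S := odflt x [pick y | Rl x y].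

Lemma class_rep_eq x y : (class_rep x == class_rep y) = Rl x y.
Proof.
case: Rl_equiv => refl [sym trans].
have rep_rel z : Rl z (class_rep z).
  by rewrite /class_rep; case: pickP => [//|/(_ z)]; rewrite refl.
apply/eqP/idP => [e|xy].
  by apply: trans (rep_rel x) _; rewrite e; apply: sym.
rewrite /class_rep (@eq_pick _ (Rl x) (Rl y)).
  by case: pickP => // /(_ y); rewrite refl.
by move=> z; apply/idP/idP; [apply: trans; apply: sym|apply: trans].
Qed.

Definition lump (w : fpath S) : fpath S := (class_rep w.1, map class_rep w.2).

Lemma lump_fext w y : lump (fext w y) = fext (lump w) (class_rep y).
Proof. by rewrite /lump /fext /= map_rcons. Qed.

Lemma lump_flast w : class_rep (flast w) = flast (lump w).
Proof. by rewrite /flast /lump /= last_map. Qed.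

Lemma lump_flast_rel v w : lump v = lump w -> Rl (flast v) (flast w).
Proof. by rewrite -class_rep_eq !lump_flast => ->. Qed.

Lemma lump_state_at w w' i : lump w = lump w' -> Rl (state_at w i) (state_at w' i).
Proof.
have rep_nth (x0 : S) s j : class_rep (nth x0 s j) = nth (class_rep x0) (map class_rep s) j.
  by elim: s j => [|a s IH] [|j] //=.
by case: w w' => x p [x' p'] [ex ep]; rewrite -class_rep_eq /state_at !rep_nth /= ex ep.
Qed.

Definition lumped_weight (Q : fpath S -> R) n (h : fpath S) :=
  \sum_(p : npath S n | lump (fpath_of p) == lump h) Q (fpath_of p).

Lemma lumped_weight_fext (Q : fpath S -> R) mu n h y :
  (forall w y, Q (fext w y) = Q w * mu w y) ->
  lumped_weight Q n.+1 (fext h y) =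
  \sum_(p : npath S n | lump (fpath_of p) == lump h)
    Q (fpath_of p) * class_mass Rl (mu (fpath_of p)) y.
Proof.
move=> Q_fext; rewrite /lumped_weight big_mkcond.
rewrite (sum_npath_succ _ (fun w => if lump w == lump (fext h y) then Q w else 0)).
rewrite [RHS]big_mkcond; apply: eq_bigr => p _.
under eq_bigr => y' _ do rewrite !lump_fext fext_eq.
have [_|_] /= := eqP; last by rewrite big1.
rewrite /class_mass mulr_sumr [RHS]big_mkcond; apply: eq_bigr => y' _.
by rewrite eq_sym class_rep_eq Q_fext.
Qed.

Lemma lumped_weight0 Q s mu h : path_weights s mu Q ->
  lumped_weight Q 0 h = if lump (s, [::]) == lump h then 1 else 0.
Proof.
move=> [Q_init _ _]; rewrite /lumped_weight big_mkcond.
rewrite (bigD1 ((s, nil_tuple S) : npath S 0)) //= Q_init eqxx big1 ?addr0.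
  by case: ifP.
move=> [x t]; rewrite (tuple0 t) /= Q_init => ne.
have /negPf-> : x != s by apply: contraNneq ne => ->.
by case: ifP.
Qed.

Lemma lumped_weight_nil Q n x : lumped_weight Q n.+1 (x, [::]) = 0.
Proof. by apply: big1 => p /eqP[_ /(congr1 size)]; rewrite size_map size_tuple. Qed.

Lemma lumped_weight_eq0 (Q : fpath S -> R) n h (p : npath S n) :
  (forall w, 0 <= Q w) -> lumped_weight Q n h = 0 ->
  lump (fpath_of p) == lump h -> Q (fpath_of p) = 0.
Proof. by move=> Q_ge0 /psumr_eq0P; apply=> // p' _; exact: Q_ge0. Qed.

Section Emulation.
Variables (s t : S) (mu : fpath S -> S -> R) (Q : fpath S -> R).
Hypotheses (Rl_st : Rl s t) (Q_weights : path_weights s mu Q).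
Variable matching : fpath S -> fpath S -> S -> R.
Hypothesis matchingP : forall v w, Rl (flast v) (flast w) ->
  coop_step (flast w) (matching v w) /\
  forall y, class_mass Rl (mu v) y = class_mass Rl (matching v w) y.

(* The average of the matching steps over the histories lumped with w, weighted by their
   conditional probabilities; any matching step will do when these have weight 0. *)
Definition emul_kernel (w : fpath S) : S -> R :=
  let n := size w.2 in
  if lumped_weight Q n w != 0 then
    fun y => \sum_(p : npath S n | lump (fpath_of p) == lump w)
      (Q (fpath_of p) / lumped_weight Q n w) * matching (fpath_of p) w y
  else matching w w.

Lemma emul_kernel_coop w : coop_step (flast w) (emul_kernel w).
Proof.
have [_ _ Q_ge0] := Q_weights; case: Rl_equiv => refl _.
rewrite /emul_kernel; case: ifPn => [lw_neq0|_]; last by case: (@matchingP w w (refl _)).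
apply: coop_step_convex => [p _||p /eqP e].
- by rewrite divr_ge0 // sumr_ge0.
- by rewrite -mulr_suml divff.
- by case: (matchingP (lump_flast_rel e)).
Qed.

Lemma class_mass_emul_kernel n (p : npath S n) h y :
  lump (fpath_of p) = lump h -> lumped_weight Q n h != 0 ->
  class_mass Rl (emul_kernel (fpath_of p)) y =
  lumped_weight Q n.+1 (fext h y) / lumped_weight Q n h.
Proof.
move=> e lw_neq0; have [_ Q_fext _] := Q_weights.
have lw_p : lumped_weight Q n (fpath_of p) = lumped_weight Q n h.
  by rewrite /lumped_weight e.
rewrite /emul_kernel -[size _]/(size (tval p.2)) size_tuple lw_p lw_neq0.
rewrite /class_mass exchange_big /=.
rewrite (lumped_weight_fext _ _ _ Q_fext) mulr_suml; apply: eq_big => [p'|p' e'].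
  by rewrite e.
rewrite -mulr_sumr; have := lump_flast_rel (eqP e').
by case/matchingP => _ /(_ y); rewrite /class_mass => <-; rewrite mulrAC.
Qed.

Lemma lumped_weight_emul Q' : path_weights t emul_kernel Q' ->
  forall n h, lumped_weight Q n h = lumped_weight Q' n h.
Proof.
move=> Q'_weights; have [_ Q_fext Q_ge0] := Q_weights.
have [_ Q'_fext Q'_ge0] := Q'_weights.
elim=> [|n IH] h.
  rewrite (lumped_weight0 _ Q_weights) (lumped_weight0 _ Q'_weights).
  suff -> : lump (s, [::]) = lump (t, [::]) by [].
  by rewrite /lump /=; congr pair; apply/eqP; rewrite class_rep_eq.
case: h => x p; case/lastP: p => [|p y]; first by rewrite !lumped_weight_nil.
rewrite -[(x, rcons p y)]/(fext (x, p) y) (lumped_weight_fext _ _ _ Q'_fext).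
have [lw_eq0|lw_neq0] := eqVneq (lumped_weight Q n (x, p)) 0.
  have lw'_eq0 : lumped_weight Q' n (x, p) = 0 by rewrite -IH.
  rewrite (lumped_weight_fext _ _ _ Q_fext) !big1 // => p' e'.
    by rewrite (lumped_weight_eq0 Q'_ge0 lw'_eq0 e') mul0r.
  by rewrite (lumped_weight_eq0 Q_ge0 lw_eq0 e') mul0r.
transitivity (\sum_(p' : npath S n | lump (fpath_of p') == lump (x, p))
   Q' (fpath_of p') * (lumped_weight Q n.+1 (fext (x, p) y) / lumped_weight Q n (x, p))).
  by rewrite -mulr_suml -/(lumped_weight Q' n (x, p)) -IH mulrC divfK.
by apply: eq_bigr => p' e'; rewrite (class_mass_emul_kernel _ (eqP e') lw_neq0).
Qed.

End Emulation.

Lemma bisim_emulation s t mu Q :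
  (forall x y, Rl x y -> forall m, coop_step x m ->
     exists m', coop_step y m' /\ forall z, class_mass Rl m z = class_mass Rl m' z) ->
  Rl s t -> (forall w, coop_step (flast w) (mu w)) -> path_weights s mu Q ->
  exists nu, (forall w, coop_step (flast w) (nu w)) /\
    forall Q', path_weights t nu Q' ->
      forall n h, lumped_weight Q n h = lumped_weight Q' n h.
Proof.
move=> transfer st mu_coop Q_weights.
have : forall vw : fpath S * fpath S, exists m : S -> R,
    Rl (flast vw.1) (flast vw.2) ->
    coop_step (flast vw.2) m /\ forall y, class_mass Rl (mu vw.1) y = class_mass Rl m y.
  move=> [v w]; have [vw|_] := boolP (Rl (flast v) (flast w)); last by exists (mu v).
  by have [m ?] := transfer _ _ vw _ (mu_coop v); exists m.
case/choice => matching matchingP.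
have matchingP' v w : Rl (flast v) (flast w) ->
    coop_step (flast w) (matching (v, w)) /\
    forall y, class_mass Rl (mu v) y = class_mass Rl (matching (v, w)) y.
  exact: matchingP (v, w).
exists (emul_kernel Q (fun v w => matching (v, w))); split => [w|Q'].
  exact: (emul_kernel_coop Q_weights matchingP' w).
exact: (lumped_weight_emul st Q_weights matchingP').
Qed.

Lemma sum_lump_invariant (Q Q' : fpath S -> R) n (G : fpath S -> Prop) :
  (forall h, lumped_weight Q n h = lumped_weight Q' n h) ->
  (forall w w', lump w = lump w' -> G w -> G w') ->
  \sum_(p : npath S n | `[< G (fpath_of p) >]) Q (fpath_of p) =
  \sum_(p : npath S n | `[< G (fpath_of p) >]) Q' (fpath_of p).
Proof.
move=> QQ' G_lump.
pose lump_npath (p : npath S n) : npath S n := (class_rep p.1, map_tuple class_rep p.2).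
have lump_npathE p p' :
    (lump_npath p == lump_npath p') = (lump (fpath_of p) == lump (fpath_of p')).
  by rewrite /lump_npath /lump /fpath_of /= !xpair_eqE.
rewrite (partition_big lump_npath xpredT) // [RHS](partition_big lump_npath xpredT) //.
apply: eq_bigr => k _.
have [[p0 [Gp0 <-]]|no_p0] := pselect (exists p0, G (fpath_of p0) /\ lump_npath p0 = k).
  have class_sum (F : fpath S -> R) :
      \sum_(p | `[< G (fpath_of p) >] && (lump_npath p == lump_npath p0)) F (fpath_of p) =
      lumped_weight F n (fpath_of p0).
    apply: eq_bigl => p; rewrite lump_npathE.
    have [e|] := eqP; last by rewrite andbF.
    by rewrite andbT; apply/asboolP; exact: G_lump (esym e) Gp0.
  by rewrite !class_sum.
by rewrite !big_pred0 // => p; apply/negP => /andP[/asboolP Gp /eqP e];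
  apply: no_p0; exists p.
Qed.

End Lumping.

(** * Path events as unions of cylinders *)

Section CylinderDecomposition.
Variables (R : realType) (S : finType) (s0 : S).

Lemma measurable_cyl (w : fpath S) : measurable (cyl S s0 w : set (pathspace S s0)).
Proof. by apply: sub_sigma_algebra; exists w. Qed.

Lemma state_at_prefix (om : nat -> S) n i :
  (i <= n)%N -> state_at (prefix_of om n) i = om i.
Proof. by case: i => [//|i] lt_in; rewrite /state_at /= nth_mkseq. Qed.

Lemma cyl_npathP n (p : npath S n) (om : ipath S s0) :
  cyl S s0 (fpath_of p) om <-> prefix_of om n = fpath_of p.
Proof. by move: (@cylP _ s0 om (fpath_of p)); rewrite [size _]size_tuple. Qed.

Local Open Scope ereal_scope.

Lemma measure_cylinder_union (P : {measure set (pathspace S s0) -> \bar R})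
    (G : nat -> fpath S -> Prop) :
  (forall om n m, G n (prefix_of om n) -> G m (prefix_of om m) -> n = m) ->
  P [set om | exists n, G n (prefix_of om n)] =
  \sum_(n <oo) \sum_(p : npath S n | `[< G n (fpath_of p) >]) P (cyl S s0 (fpath_of p)).
Proof.
move=> G_uniq.
pose D n : {pred npath S n} := [pred p | `[< G n (fpath_of p) >]].
pose C n (p : npath S n) : set (pathspace S s0) := cyl S s0 (fpath_of p).
pose E n := \bigcup_(p in [set` D n]) C n p.
have C_disj n : trivIset [set` D n] (C n).
  move=> p p' _ _ [om [/cyl_npathP e /cyl_npathP e']].
  by apply: fpath_of_inj; rewrite -e e'.
have C_meas n p : measurable (C n p) by exact: measurable_cyl.
have -> : [set om | exists n, G n (prefix_of om n)] = \bigcup_n E n.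
  apply/seteqP; split=> om /=.
    move=> [n Gn]; exists n => //.
    exists (om 0%N, [tuple of map (fun i => om i.+1) (iota 0 n)]).
      by apply/asboolP.
    exact/cyl_npathP.
  by move=> [n _ [p /asboolW Gp /cyl_npathP e]]; exists n; rewrite e.
rewrite measure_bigcup //=.
- rewrite (@eq_eseriesl _ _ (fun _ => true)) => [|i]; last by rewrite in_setT.
  apply: eq_eseriesr => n _; rewrite measure_fin_bigcup //; last exact: C_disj.
  by rewrite -(bigfs _ (index_enum_uniq _)) // => p _; rewrite mem_index_enum.
- by move=> n _; apply: fin_bigcup_measurable => //; exact: finite_finpred.
- move=> n m _ _ [om [[p /asboolW Gp /cyl_npathP ep] [p' /asboolW Gp' /cyl_npathP ep']]].
  by apply: (G_uniq om); rewrite ?ep ?ep'.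
Qed.

End CylinderDecomposition.

(** * Bisimulation invariance *)

Section PathMeasures.
Variables (R : realType) (M : imdp R).
Local Notation S := (st M).

Lemma fine_cylK s (P : probability (pathspace S s) R) w :
  (fine (P (cyl S s w)))%:E = P (cyl S s w).
Proof.
rewrite fineK // ge0_fin_numE ?measure_ge0 //.
by apply: (le_lt_trans (probability_le1 _ _)); [exact: measurable_cyl|exact: ltey].
Qed.

Lemma path_measure_weights (sg : scheduler M) (pi : nature M) s P :
  is_path_measure sg pi s P ->
  path_weights s (fun w y => \sum_a sg w a * pi w a y) (fun w => fine (P (cyl S s w))).
Proof.
move=> [P_init P_fext]; split=> [x|w y|w]; first by rewrite P_init; case: ifP.
  by rewrite P_fext -(fine_cylK P w) -EFinM.
exact/fine_ge0/measure_ge0.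
Qed.

Lemma sched_kernel_coop (sg : scheduler M) (pi : nature M) w :
  coop_step (flast w) (fun y => \sum_a sg w a * pi w a y).
Proof.
apply: sched_step_coop; exists (sg w), (pi w).
by split=> [|a|//]; [exact: sched_distr|exact: natf_in].
Qed.

Lemma exists_sched_path_measure s (nu : fpath S -> S -> R) :
  (forall w, coop_step (flast w) (nu w)) ->
  exists (sg : scheduler M) (pi : nature M) (P : probability (pathspace S s) R),
    is_path_measure sg pi s P /\ path_weights s nu (fun w => fine (P (cyl S s w))).
Proof.
move=> nu_coop.
have /choice[sp spP] : forall w, exists sp : (act M -> R) * (act M -> S -> R),
    [/\ is_distr sp.1, forall a, Gamma (flast w) a (sp.2 a)
      & forall y, nu w y = \sum_a sp.1 a * sp.2 a y].
  by move=> w; have [sg [pi ?]] := coop_step_sched (nu_coop w); exists (sg, pi).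
pose sg := @Scheduler R M (fun w => (sp w).1) (fun w => let: And3 h _ _ := spP w in h).
pose pi := @Nature R M (fun w => (sp w).2) (fun w => let: And3 _ h _ := spP w in h).
have nu_distr w : is_distr (nu w).
  have [[sg_ge0 sg_sum1] piG nuE] := spP w; split=> [y|].
    by rewrite nuE sumr_ge0 // => a _; rewrite mulr_ge0 //; case: (piG a) => -[].
  rewrite -sg_sum1; under eq_bigr do rewrite nuE; rewrite exchange_big /=.
  by apply: eq_bigr => a _; rewrite -mulr_sumr; case: (piG a) => -[_ ->]; rewrite mulr1.
have [P [P_init P_fext]] := exists_path_measure s nu_distr.
have P_path : is_path_measure sg pi s P.
  by split=> // w y; rewrite P_fext; case: (spP w) => _ _ ->.
exists sg, pi, P; split=> //; have [Q_init Q_fext Q_ge0] := path_measure_weights P_path.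
by split=> // w y; rewrite Q_fext; case: (spP w) => _ _ ->.
Qed.

End PathMeasures.

Scheme sform_ind2 := Induction for sform Sort Prop
  with pform_ind2 := Induction for pform Sort Prop.

Section Bisimulation.
Variables (R : realType) (M : imdp R) (Rl : rel (st M)).
Hypothesis Rl_bisim : is_forall_bisim Rl.
Local Notation S := (st M).

Let Rl_equiv : is_equivalence Rl. Proof. by case: Rl_bisim. Qed.

Let Rl_transfer x y : Rl x y -> forall mu, coop_step x mu ->
  exists nu, coop_step y nu /\ forall z, class_mass Rl mu z = class_mass Rl nu z.
Proof. by move=> xy; case: Rl_bisim => _ /(_ x y xy) []. Qed.

Definition lump_cylinder_event (g : pform (ap M)) : Prop :=
  exists G : nat -> fpath S -> Prop,
  [/\ forall om, sat_p g om <-> exists n, G n (prefix_of om n),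
      forall om n m, G n (prefix_of om n) -> G m (prefix_of om m) -> n = m &
      forall n w w', lump Rl w = lump Rl w' -> G n w -> G n w'].

Lemma sat_prob_transfer c p g x y : Rl x y -> lump_cylinder_event g ->
  sat_s (SProb c p g) x -> sat_s (SProb c p g) y.
Proof.
move=> xy [G [G_sat G_uniq G_lump]] [sg [pi [P [P_path cmp_P]]]].
have [nu [nu_coop lumped_eq]] := bisim_emulation Rl_equiv Rl_transfer xy
  (sched_kernel_coop sg pi) (path_measure_weights P_path).
have [sg' [pi' [P' [P'_path P'_weights]]]] := exists_sched_path_measure y nu_coop.
exists sg', pi', P'; split=> //.
have event_eq s :
    [set om : ipath S s | sat_p g om] = [set om | exists n, G n (prefix_of om n)].
  by apply/seteqP; split=> om /G_sat.
suff -> : P' [set om | sat_p g om] = P [set om | sat_p g om] by [].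
rewrite !event_eq !measure_cylinder_union //; apply: eq_eseriesr => n _.
rewrite -!(eq_bigr _ (fun p _ => fine_cylK _ (fpath_of p))) !sumEFin.
by rewrite (sum_lump_invariant (lumped_eq _ P'_weights n) (G_lump n)).
Qed.

Lemma until_cylinder_event (g : pform (ap M)) (F1 F2 : S -> Prop) (B : pred nat) :
  (forall x y, Rl x y -> F1 x -> F1 y) -> (forall x y, Rl x y -> F2 x -> F2 y) ->
  (forall n m, (m <= n)%N -> B n -> B m) ->
  (forall om, sat_p g om <->
     exists i, [/\ B i, F2 (om i) & forall j, (j < i)%N -> F1 (om j)]) ->
  lump_cylinder_event g.
Proof.
move=> F1_inv F2_inv B_down g_sat.
(* Only the first time F2 holds is recorded, which makes the prefixes unique. *)
exists (fun n w => [/\ B n, F2 (state_at w n)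
  & forall j, (j < n)%N -> F1 (state_at w j) /\ ~ F2 (state_at w j)]).
split=> [om|om n m|n w w' ww'].
- rewrite g_sat; split=> [[i [Bi F2i F1i]]|[n [Bn]]].
    have F2_ex : exists m, `[< F2 (om m) >] by exists i; exact/asboolP.
    have [m /asboolP F2m min_m] := ex_minnP F2_ex.
    have mi : (m <= i)%N by apply/min_m/asboolP.
    exists m; split; [exact: B_down Bi|by rewrite state_at_prefix|move=> j jm].
    rewrite state_at_prefix ?(ltnW jm) //; split; first exact/F1i/(leq_trans jm).
    by move/asboolP/min_m; rewrite leqNgt jm.
  rewrite state_at_prefix // => F2n F1n; exists n; split=> // j jn.
  by have [] := F1n j jn; rewrite state_at_prefix ?(ltnW jn).
- move=> [_ F2n F1n] [_ F2m F1m]; move: F2n F2m; rewrite !state_at_prefix // => F2n F2m.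
  case: (ltngtP n m) => // [nm|mn].
    by have [_] := F1m n nm; rewrite state_at_prefix ?(ltnW nm).
  by have [_] := F1n m mn; rewrite state_at_prefix ?(ltnW mn).
- have rel_at i := lump_state_at Rl_equiv i ww'.
  have rel_at' i := lump_state_at Rl_equiv i (esym ww').
  move=> [Bn F2n F1n]; split=> [//|//|j jn]; first exact: F2_inv (rel_at n) F2n.
  have [F1j nF2j] := F1n j jn; split; first exact: F1_inv (rel_at j) F1j.
  by move/(F2_inv _ _ (rel_at' j)).
Qed.

Lemma bisim_sat_iff f x y : Rl x y -> (sat_s f x <-> sat_s f y).
Proof.
have [refl [sym _]] := Rl_equiv.
move: f x y; apply: (sform_ind2 (P0 := lump_cylinder_event)
  (P := fun f => forall x y, Rl x y -> (sat_s f x <-> sat_s f y))).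
- by [].
- by move=> a x y xy /=; case: Rl_bisim => _ /(_ x y xy) [->].
- by move=> f IH x y /IH /= ->.
- by move=> f1 IH1 f2 IH2 x y xy /=; rewrite (IH1 x y xy) (IH2 x y xy).
- by move=> c p g IHg x y xy; split; apply: sat_prob_transfer => //; exact: sym.
- move=> f IH; exists (fun n w => n = 1%N /\ sat_s f (state_at w 1)).
  split=> [om /=|om n m [-> _] [-> _] //|n w w' ww' [-> fw]].
    by split=> [fom|[n [-> ]]]; [exists 1%N|]; rewrite state_at_prefix.
  by split=> //; apply/(IH _ _ (lump_state_at Rl_equiv 1 ww')).
- move=> f1 IH1 f2 IH2.
  apply: (@until_cylinder_event _ (sat_s f1) (sat_s f2) predT) => //.
  + by move=> x y /IH1 ->.
  + by move=> x y /IH2 ->.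
  + move=> om /=; split=> [[k [i [_ [F2i F1i]]]]|[i [_ F2i F1i]]]; first by exists i.
    by exists i.+1, i.
- move=> f1 IH1 f2 IH2 k.
  apply: (@until_cylinder_event _ (sat_s f1) (sat_s f2) (fun i => (i < k)%N)).
  + by move=> x y /IH1 ->.
  + by move=> x y /IH2 ->.
  + by move=> n m /leq_ltn_trans; apply.
  + by move=> om /=; split=> [[i [? [? ?]]]|[i [? ? ?]]]; exists i.
Qed.

End Bisimulation.

Theorem corollary1 (R : realType) (M : imdp R) (s t : st M) :
  bisim_forall s t ->
  forall phi : sform (ap M), sat_s phi s <-> sat_s phi t.
Proof. by move=> [Rl [Rl_bisim Rl_st]] phi; exact: (bisim_sat_iff Rl_bisim phi Rl_st). Qed.
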